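(* Let $a,b,c$ be positive numbers with $a<b<c$, and suppose $Q_{a,b,c}<+\infty$. Then for every $t\in[0,b)$ and every complex vector $\mathbf z=(\mathbf z(\lambda))_{\lambda\in b\mathbb Z}$, $$\sum_{\mu\in a\mathbb Z,\ 0\le\mu\le aQ_{a,b,c}+2a+b+c}|(\mathbf M_{a,b,c}(t)\mathbf z)(\mu)|\ \ge\ \frac{b}{2c}|\mathbf z(0)|.$$
   Context: For $a,b,c>0$ and $t\in\mathbb R$, $\mathbf M_{a,b,c}(t)=(\chi_{[0,c)}(t-\mu+\lambda))_{\mu\in a\mathbb Z,\lambda\in b\mathbb Z}$ is the infinite matrix with rows indexed by $a\mathbb Z$ and columns by $b\mathbb Z$, acting by $(\mathbf M_{a,b,c}(t)\mathbf x)(\mu)=\sum_{\lambda\in b\mathbb Z}\chi_{[0,c)}(t-\mu+\lambda)\mathbf x(\lambda)$ (each such sum is finite). $\mathcal B_b$ is the set of vectors $(\mathbf x(\lambda))_{\lambda\in b\mathbb Z}$ with entries in $\{0,1\}$. For $t\in\mathbb R$ and $\mathbf x\in\mathcal B_b$, let $K(t,\mathbf x)=\{\mu\in a\mathbb Z:(\mathbf M_{a,b,c}(t)\mathbf x)(\mu)=2\}$, let $Q_{a,b,c}(t,\mathbf x)=0$ if $K(t,\mathbf x)=\emptyset$ and otherwise $Q_{a,b,c}(t,\mathbf x)=\sup\{n\in\mathbb N:[\mu,\mu+na)\cap a\mathbb Z\subset K(t,\mathbf x)\text{ for some }\mu\in a\mathbb Z\}$, and $Q_{a,b,c}=\sup_{t\in\mathbb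 R}\sup_{\mathbf x\in\mathcal B_b}Q_{a,b,c}(t,\mathbf x)$. *)

From Stdlib Require Import Reals Lra ZArith.
Open Scope R_scope.

Fixpoint zsum (lo : Z) (n : nat) (f : Z -> R) : R :=
  match n with
  | O => 0
  | S n' => f (lo + Z.of_nat n')%Z + zsum lo n' f
  end.

(* Entry of M_{a,b,c}(t) at row mu = a*m (m in Z), column lambda = b*k (k in Z):
   chi_[0,c)(t - mu + lambda). *)
Definition Mentry (a b c t : R) (m k : Z) : R :=
  if Rle_dec 0 (t - a * IZR m + b * IZR k) then
    if Rlt_dec (t - a * IZR m + b * IZR k) c then 1 else 0
  else 0.

(* (M_{a,b,c}(t) x)(a m) = sum_{k in Z} Mentry * x(b k).  Only finitely many k
   have a nonzero entry (those with a m - t <= b k < a m - t + c); all of them lie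
   in the window [K0, K0 + n) below (K0 = floor((am - t)/b) - 1,
   n = up(c/b) + 3), so this finite sum equals the full (finite-support) sum. *)
Definition Mwin_lo (a b t : R) (m : Z) : Z := (up ((a * IZR m - t) / b) - 2)%Z.
Definition Mwin_len (b c : R) : nat := Z.to_nat (up (c / b) + 3).

Definition Mapply (a b c t : R) (x : Z -> R) (m : Z) : R :=
  zsum (Mwin_lo a b t m) (Mwin_len b c) (fun k => Mentry a b c t m k * x k).

(* Complex numbers as pairs (re, im) of reals; a complex vector indexed by bZ
   is a map Z -> R * R (z k = z(b k)). *)
Definition Cmod (p : R * R) : R := sqrt (fst p * fst p + snd p * snd p).

Definition Mapply_C (a b c t : R) (z : Z -> R * R) (m : Z) : R * R :=
  (Mapply a b c t (fun k => fst (z k)) m, Mapply a b c t (fun k => snd (z k)) m).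

(* Binary vectors x in B_b : Z -> bool, viewed as {0,1}-valued. *)
Definition b2R (x : bool) : R := if x then 1 else 0.

Definition inK (a b c t : R) (x : Z -> bool) (m : Z) : Prop :=
  Mapply a b c t (fun k => b2R (x k)) m = 2.

Definition run_in_K (a b c t : R) (x : Z -> bool) (m : Z) (n : nat) : Prop :=
  forall j : nat, (j < n)%nat -> inK a b c t x (m + Z.of_nat j)%Z.

(* n is an achievable run length for some t, x (n = 0 is always achievable,
   matching the convention Q(t,x) = 0 when K(t,x) is empty). *)
Definition run_len (a b c : R) (n : nat) : Prop :=
  exists (t : R) (x : Z -> bool) (m : Z), run_in_K a b c t x m n.

(* "Q_{a,b,c} < +infinity and Q_{a,b,c} = Q": Q is the supremum (in N) of the
   achievable run lengths. *)
Definition IsQ (a b c : R) (Q : nat) : Prop :=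
  (forall n, run_len a b c n -> (n <= Q)%nat) /\
  (forall N : nat, (forall n, run_len a b c n -> (n <= N)%nat) -> (Q <= N)%nat).

Definition sum_mu (a B : R) (F : Z -> R) : R :=
  zsum 0 (S (Z.to_nat (up (B / a))))
    (fun m => if Rle_dec (a * IZR m) B then F m else 0).

(* Row m of M_{a,b,c}(t) is the indicator of a window of columns [L m, U m)
   with L m = ceil((a m - t)/b) and U m = ceil((a m - t + c)/b).  Since
   a < b < c, both ends move by 0 or 1 from one row to the next and every
   window is nonempty.  Going from row m to row m+1, the column L m leaves
   when L jumps, and the column U m enters when U jumps, so
   z(L m) = W m - W (m+1) (+ z(U m)), where W m = (M z)(m) is a window sum.

   Follow an entry of the window of row m down the rows: when it leaves
   and a new column enters at the same time, follow the newcomer instead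
   ("step"); when it leaves and nothing enters, the followed chain dies.
   Telescoping along dying chains bounds the sum of |z k| over any set of
   entries whose chains die within n rows by |W m| + 2 (|W (m+1)| + ... +
   |W (m+n)|) (dying_entries_bound), since at each row only one chain can
   leave.  Two chains that both survive Q rows give a 0-1 vector with
   exactly two ones in Q+1 consecutive windows, which is excluded by the
   definition of Q (two_surviving_chains).  Hence all entries but at most
   one die within Q rows, which yields |z(L m)| <= 2 (|W m| + ... +
   |W (m+Q)|) (first_entry_bound); with m = 0, L 0 = 0 and b/(2c) < 1/2
   this gives the theorem. *)

From Stdlib Require Import Reals Rgeom ZArith Lra Lia List Classical.
Open Scope R_scope.

Lemma zsum_ext lo n f g :
  (forall k, (lo <= k < lo + Z.of_nat n)%Z -> f k = g k) -> zsum lo n f = zsum lo n g.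
Proof.
  induction n as [|n IH]; intros Hfg; simpl; [reflexivity|].
  rewrite Hfg by lia. rewrite IH; [reflexivity|]. intros k Hk. apply Hfg. lia.
Qed.

Lemma zsum_app lo n p f : zsum lo (n + p) f = zsum lo n f + zsum (lo + Z.of_nat n) p f.
Proof.
  induction p as [|p IH]; simpl.
  - rewrite Nat.add_0_r; ring.
  - rewrite Nat.add_succ_r; simpl. rewrite IH.
    replace (lo + Z.of_nat (n + p))%Z with (lo + Z.of_nat n + Z.of_nat p)%Z by lia. ring.
Qed.

Lemma zsum_cons lo n f : zsum lo (S n) f = f lo + zsum (lo + 1) n f.
Proof.
  change (S n) with (1 + n)%nat. rewrite zsum_app. simpl.
  replace (lo + 0)%Z with lo by lia. ring.
Qed.

Lemma zsum_nonneg lo n f : (forall k, 0 <= f k) -> 0 <= zsum lo n f.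
Proof.
  intros Hf. induction n as [|n IH]; simpl; [lra|].
  pose proof (Hf (lo + Z.of_nat n)%Z). lra.
Qed.

Lemma zsum_zero lo n f : (forall k, (lo <= k < lo + Z.of_nat n)%Z -> f k = 0) -> zsum lo n f = 0.
Proof.
  induction n as [|n IH]; intros Hf; simpl; [reflexivity|].
  rewrite Hf by lia. rewrite IH; [ring|]. intros k Hk. apply Hf. lia.
Qed.

Lemma zsum_plus lo n f g : zsum lo n (fun k => f k + g k) = zsum lo n f + zsum lo n g.
Proof. induction n as [|n IH]; simpl; [ring|]. rewrite IH. ring. Qed.

Lemma zsum_delta lo n p :
  (lo <= p < lo + Z.of_nat n)%Z -> zsum lo n (fun k => if Z.eq_dec k p then 1 else 0) = 1.
Proof.
  induction n as [|n IH]; intros Hp; simpl; [lia|].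
  destruct (Z.eq_dec (lo + Z.of_nat n) p) as [<-|Hne].
  - rewrite zsum_zero; [ring|]. intros k Hk. destruct (Z.eq_dec k _); [lia|reflexivity].
  - rewrite IH by lia. ring.
Qed.

Definition isum (x : Z -> R) (l u : Z) : R := zsum l (Z.to_nat (u - l)) x.

Lemma isum_cons x l u : (l < u)%Z -> isum x l u = x l + isum x (l + 1) u.
Proof.
  intros H. unfold isum. replace (Z.to_nat (u - l)) with (S (Z.to_nat (u - (l + 1)))) by lia.
  apply zsum_cons.
Qed.

Lemma isum_snoc x l u : (l <= u)%Z -> isum x l (u + 1) = isum x l u + x u.
Proof.
  intros H. unfold isum. replace (Z.to_nat (u + 1 - l)) with (S (Z.to_nat (u - l))) by lia.
  simpl. replace (l + Z.of_nat (Z.to_nat (u - l)))%Z with u by lia. ring.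
Qed.

Lemma zsum_window lo n l u (g x : Z -> R) :
  (lo <= l)%Z -> (l <= u)%Z -> (u <= lo + Z.of_nat n)%Z ->
  (forall k, g k = if ((l <=? k)%Z && (k <? u)%Z)%bool then x k else 0) ->
  zsum lo n g = isum x l u.
Proof.
  intros H1 H2 H3 Hg.
  replace n with (Z.to_nat (l - lo) + (Z.to_nat (u - l) + (n - Z.to_nat (l - lo) - Z.to_nat (u - l))))%nat
    by lia.
  rewrite !zsum_app.
  replace (lo + Z.of_nat (Z.to_nat (l - lo)))%Z with l by lia.
  rewrite (zsum_zero lo), (zsum_zero (l + _)).
  - unfold isum. rewrite Rplus_0_l, Rplus_0_r. apply zsum_ext. intros k Hk.
    rewrite Hg. destruct (Z.leb_spec l k), (Z.ltb_spec k u); simpl; reflexivity || lia.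
  - intros k Hk. rewrite Hg. destruct (Z.ltb_spec k u); [lia|]. now rewrite Bool.andb_false_r.
  - intros k Hk. rewrite Hg. destruct (Z.leb_spec l k); [lia|]. reflexivity.
Qed.

Definition lsum (g : Z -> R) (K : list Z) : R := fold_right (fun k acc => g k + acc) 0 K.

Lemma lsum_app g K1 K2 : lsum g (K1 ++ K2) = lsum g K1 + lsum g K2.
Proof. induction K1 as [|k K1 IH]; simpl; [ring|]. rewrite IH. ring. Qed.

Fixpoint zrange (lo : Z) (n : nat) : list Z :=
  match n with O => nil | S n' => (lo + Z.of_nat n')%Z :: zrange lo n' end.

Lemma in_zrange lo n k : In k (zrange lo n) <-> (lo <= k < lo + Z.of_nat n)%Z.
Proof. induction n as [|n IH]; simpl; [lia|]. rewrite IH. lia. Qed.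

Lemma zrange_NoDup lo n : NoDup (zrange lo n).
Proof. induction n as [|n IH]; simpl; constructor; auto. rewrite in_zrange. lia. Qed.

Lemma lsum_zrange g lo n : lsum g (zrange lo n) = zsum lo n g.
Proof. induction n as [|n IH]; simpl; [reflexivity|]. now rewrite IH. Qed.

Lemma Cmod_dist p : Cmod p = dist_euc (fst p) (snd p) 0 0.
Proof. unfold Cmod, dist_euc, Rsqr. f_equal. ring. Qed.

Lemma Cmod_nonneg p : 0 <= Cmod p.
Proof. apply sqrt_pos. Qed.

Lemma Cmod_zero : Cmod (0, 0) = 0.
Proof. rewrite Cmod_dist. apply distance_refl. Qed.

Lemma Cmod_opp x y : Cmod (- x, - y) = Cmod (x, y).
Proof. unfold Cmod; simpl. f_equal. ring. Qed.

Lemma Cmod_add_le x1 y1 x2 y2 : Cmod (x1 + x2, y1 + y2) <= Cmod (x1, y1) + Cmod (x2, y2).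
Proof.
  rewrite !Cmod_dist; simpl.
  replace (dist_euc x1 y1 0 0) with (dist_euc (x1 + x2) (y1 + y2) x2 y2)
    by (unfold dist_euc, Rsqr; f_equal; ring).
  apply triangle.
Qed.

Lemma Cmod_split3 p q r s :
  fst p = fst q - fst r + fst s -> snd p = snd q - snd r + snd s ->
  Cmod p <= Cmod q + Cmod r + Cmod s.
Proof.
  destruct p as [p1 p2], q as [q1 q2], r as [r1 r2], s as [s1 s2]; simpl; intros -> ->.
  pose proof (Cmod_add_le (q1 - r1) (q2 - r2) s1 s2).
  pose proof (Cmod_add_le q1 q2 (- r1) (- r2)). rewrite Cmod_opp in *.
  unfold Rminus in *. lra.
Qed.

Lemma Cmod_zsum (z : Z -> R * R) lo n :
  Cmod (zsum lo n (fun k => fst (z k)), zsum lo n (fun k => snd (z k)))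
  <= zsum lo n (fun k => Cmod (z k)).
Proof.
  induction n as [|n IH]; simpl.
  - rewrite Cmod_zero. lra.
  - pose proof (Cmod_add_le (fst (z (lo + Z.of_nat n)%Z)) (snd (z (lo + Z.of_nat n)%Z))
      (zsum lo n (fun k => fst (z k))) (zsum lo n (fun k => snd (z k)))).
    destruct (z (lo + Z.of_nat n)%Z). simpl in *. lra.
Qed.

Definition ceil (y : R) : Z := (1 - up (- y))%Z.

Lemma ceil_bounds y : y <= IZR (ceil y) < y + 1.
Proof.
  unfold ceil. destruct (archimed (- y)). rewrite minus_IZR. simpl. lra.
Qed.

Lemma ceil_le_iff y k : (ceil y <= k)%Z <-> y <= IZR k.
Proof.
  destruct (ceil_bounds y) as [Hlo Hhi]. split; intros Hk.
  - apply IZR_le in Hk. lra.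
  - destruct (Z.le_gt_cases (ceil y) k) as [|Hgt]; [assumption|].
    assert (Hle : IZR k <= IZR (ceil y - 1)) by (apply IZR_le; lia).
    rewrite minus_IZR in Hle. simpl in Hle. lra.
Qed.

Lemma ceil_gt_iff y k : (k < ceil y)%Z <-> IZR k < y.
Proof.
  pose proof (ceil_le_iff y k).
  destruct (Z.lt_ge_cases k (ceil y)), (Rlt_le_dec (IZR k) y); intuition (lia || lra).
Qed.

Lemma ceil_shift y d : 0 <= d <= 1 -> (ceil y <= ceil (y + d) <= ceil y + 1)%Z.
Proof.
  intros Hd. destruct (ceil_bounds y), (ceil_bounds (y + d)). split.
  - apply ceil_le_iff. lra.
  - apply ceil_le_iff. rewrite plus_IZR. simpl. lra.
Qed.

Lemma scale_le u v b : 0 < b -> (u <= v <-> u * b <= v * b).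
Proof. intros Hb. split; intros H; nra. Qed.

Lemma scale_lt u v b : 0 < b -> (u < v <-> u * b < v * b).
Proof. intros Hb. split; intros H; nra. Qed.

Definition row_lo (a b t : R) (m : Z) : Z := ceil ((a * IZR m - t) / b).
Definition row_hi (a b c t : R) (m : Z) : Z := ceil ((a * IZR m - t + c) / b).

Lemma Mentry_window a b c t m k : 0 < b ->
  Mentry a b c t m k = if ((row_lo a b t m <=? k)%Z && (k <? row_hi a b c t m)%Z)%bool then 1 else 0.
Proof.
  intros Hb. unfold Mentry, row_lo, row_hi.
  assert (Elo : (ceil ((a * IZR m - t) / b) <= k)%Z <-> 0 <= t - a * IZR m + b * IZR k).
  { rewrite ceil_le_iff, (scale_le _ _ b) by exact Hb.
    replace ((a * IZR m - t) / b * b) with (a * IZR m - t) by (field; lra). lra. }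
  assert (Ehi : (k < ceil ((a * IZR m - t + c) / b))%Z <-> t - a * IZR m + b * IZR k < c).
  { rewrite ceil_gt_iff, (scale_lt _ _ b) by exact Hb.
    replace ((a * IZR m - t + c) / b * b) with (a * IZR m - t + c) by (field; lra). lra. }
  destruct (Rle_dec 0 (t - a * IZR m + b * IZR k)) as [H1|H1];
    [destruct (Rlt_dec (t - a * IZR m + b * IZR k) c) as [H2|H2]|].
  - apply Elo in H1. apply Ehi in H2.
    rewrite (proj2 (Z.leb_le _ _) H1), (proj2 (Z.ltb_lt _ _) H2). reflexivity.
  - assert (Hk : ~ (k < ceil ((a * IZR m - t + c) / b))%Z) by (rewrite Ehi; exact H2).
    rewrite (proj2 (Z.ltb_ge _ _)) by lia. now rewrite Bool.andb_false_r.
  - assert (Hk : ~ (ceil ((a * IZR m - t) / b) <= k)%Z) by (rewrite Elo; exact H1).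
    rewrite (proj2 (Z.leb_gt _ _)) by lia. reflexivity.
Qed.

Lemma Mapply_window a b c t x m : 0 < b -> b < c ->
  Mapply a b c t x m = isum x (row_lo a b t m) (row_hi a b c t m).
Proof.
  intros Hb Hbc. unfold Mapply. apply zsum_window.
  4: { intros k. rewrite Mentry_window by exact Hb. destruct (andb _ _); ring. }
  all: unfold Mwin_lo, Mwin_len, row_lo, row_hi.
  all: set (y := (a * IZR m - t) / b).
  all: replace ((a * IZR m - t + c) / b) with (y + c / b) by (unfold y; field; lra).
  all: assert (Hcb : 1 < c / b) by (apply (scale_lt _ _ b); [lra|]; field_simplify; lra).
  all: destruct (archimed y), (archimed (c / b)), (ceil_bounds y), (ceil_bounds (y + c / b)).
  - apply le_IZR. rewrite minus_IZR. simpl. lra.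
  - apply le_IZR. lra.
  - assert (0 <= up (c / b))%Z by (apply le_IZR; lra).
    rewrite Z2Nat.id by lia. apply le_IZR. rewrite !plus_IZR, minus_IZR. simpl. lra.
Qed.

Lemma row_lo_step a b t m : 0 < a -> a < b ->
  (row_lo a b t m <= row_lo a b t (m + 1) <= row_lo a b t m + 1)%Z.
Proof.
  intros Ha Hab. unfold row_lo. rewrite plus_IZR.
  replace ((a * (IZR m + 1) - t) / b) with ((a * IZR m - t) / b + a / b) by (field; lra).
  apply ceil_shift. split.
  - apply Rlt_le, Rdiv_lt_0_compat; lra.
  - apply (scale_le _ _ b); [lra|]. field_simplify; lra.
Qed.

Lemma row_hi_step a b c t m : 0 < a -> a < b ->
  (row_hi a b c t m <= row_hi a b c t (m + 1) <= row_hi a b c t m + 1)%Z.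
Proof.
  intros Ha Hab. unfold row_hi. rewrite plus_IZR.
  replace ((a * (IZR m + 1) - t + c) / b) with ((a * IZR m - t + c) / b + a / b)
    by (field; lra).
  apply ceil_shift. split.
  - apply Rlt_le, Rdiv_lt_0_compat; lra.
  - apply (scale_le _ _ b); [lra|]. field_simplify; lra.
Qed.

Lemma row_lo_lt_hi a b c t m : 0 < b -> b < c -> (row_lo a b t m < row_hi a b c t m)%Z.
Proof.
  intros Hb Hbc. unfold row_lo, row_hi.
  replace ((a * IZR m - t + c) / b) with ((a * IZR m - t) / b + c / b) by (field; lra).
  assert (1 < c / b) by (apply (scale_lt _ _ b); [lra|]; field_simplify; lra).
  apply ceil_gt_iff. pose proof (ceil_bounds ((a * IZR m - t) / b)). lra.
Qed.

Lemma row_lo_zero a b t : 0 <= t < b -> row_lo a b t 0 = 0%Z.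
Proof.
  intros Ht. unfold row_lo. simpl.
  replace ((a * 0 - t) / b) with (- (t / b)) by (field; lra).
  assert (0 <= t / b < 1).
  { split.
    - apply (scale_le _ _ b); [lra|]. field_simplify; lra.
    - apply (scale_lt _ _ b); [lra|]. field_simplify; lra. }
  assert (ceil (- (t / b)) <= 0)%Z by (apply ceil_le_iff; simpl; lra).
  assert (-1 < ceil (- (t / b)))%Z by (apply ceil_gt_iff; simpl; lra).
  lia.
Qed.

Lemma nondecr_shift (F : Z -> Z) :
  (forall m, (F m <= F (m + 1))%Z) -> forall m d, (F m <= F (m + Z.of_nat d))%Z.
Proof.
  intros HF m d. induction d as [|d IH]; [simpl; rewrite Z.add_0_r; lia|].
  specialize (HF (m + Z.of_nat d)%Z).
  replace (m + Z.of_nat (S d))%Z with (m + Z.of_nat d + 1)%Z by lia. lia.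
Qed.

Section SlidingWindows.

Variables L U : Z -> Z.
Hypothesis L_step : forall m, (L m <= L (m + 1) <= L m + 1)%Z.
Hypothesis U_step : forall m, (U m <= U (m + 1) <= U m + 1)%Z.
Hypothesis L_lt_U : forall m, (L m < U m)%Z.

Definition in_window (m k : Z) : Prop := (L m <= k < U m)%Z.

Definition Cwin (z : Z -> R * R) (m : Z) : R * R :=
  (isum (fun k => fst (z k)) (L m) (U m), isum (fun k => snd (z k)) (L m) (U m)).

Lemma isum_leave x m : L (m + 1) = (L m + 1)%Z ->
  x (L m) = isum x (L m) (U m) - isum x (L (m + 1)) (U (m + 1))
            + (if Z.eq_dec (U (m + 1)) (U m) then 0 else x (U m)).
Proof.
  intros HLj. pose proof (L_lt_U m). pose proof (U_step m).
  rewrite HLj, (isum_cons x (L m) (U m)) by lia.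
  destruct (Z.eq_dec (U (m + 1)) (U m)) as [-> | HU]; [ring|].
  replace (U (m + 1)) with (U m + 1)%Z by lia. rewrite isum_snoc by lia. ring.
Qed.

Lemma leaving_entry_bound z m : L (m + 1) = (L m + 1)%Z ->
  Cmod (z (L m)) <= Cmod (Cwin z m) + Cmod (Cwin z (m + 1))
                    + (if Z.eq_dec (U (m + 1)) (U m) then 0 else Cmod (z (U m))).
Proof.
  intros HLj.
  pose proof (isum_leave (fun k => fst (z k)) m HLj) as E1.
  pose proof (isum_leave (fun k => snd (z k)) m HLj) as E2.
  destruct (Z.eq_dec (U (m + 1)) (U m)).
  - rewrite <- Cmod_zero. apply Cmod_split3; simpl; lra.
  - apply Cmod_split3; simpl; lra.
Qed.

(* The column followed in row m+1 by a chain that is at column e in row m. *)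
Definition step (m e : Z) : Z :=
  if Z.eq_dec e (L m) then
    if Z.eq_dec (L (m + 1)) (L m + 1) then U m else e
  else e.

Definition dies (m e : Z) : Prop :=
  e = L m /\ L (m + 1) = (L m + 1)%Z /\ U (m + 1) = U m.

Fixpoint dies_within (n : nat) (m e : Z) : Prop :=
  match n with
  | O => False
  | S n' => dies m e \/ dies_within n' (m + 1) (step m e)
  end.

Lemma step_in_window m e : in_window m e -> ~ dies m e -> in_window (m + 1) (step m e).
Proof.
  unfold in_window, dies, step. intros He Hd.
  pose proof (L_step m). pose proof (U_step m). pose proof (L_lt_U m).
  destruct (Z.eq_dec e (L m)); [destruct (Z.eq_dec (L (m + 1)) (L m + 1))|]; lia.
Qed.

Lemma step_injective m e1 e2 :
  in_window m e1 -> in_window m e2 -> e1 <> e2 -> step m e1 <> step m e2.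
Proof.
  unfold in_window, step. intros.
  destruct (Z.eq_dec e1 (L m)), (Z.eq_dec e2 (L m));
    try destruct (Z.eq_dec (L (m + 1)) (L m + 1)); lia.
Qed.

Lemma staying_entry n m k :
  in_window m k -> dies_within (S n) m k -> ~ (k = L m /\ L (m + 1) = (L m + 1)%Z) ->
  in_window (m + 1) k /\ dies_within n (m + 1) k.
Proof.
  intros Hw [Hd | Hd] Hst; [unfold dies in Hd; tauto|].
  assert (Hs : step m k = k)
    by (unfold step; destruct (Z.eq_dec k (L m)); [destruct (Z.eq_dec (L (m + 1)) (L m + 1))|]; tauto).
  rewrite Hs in Hd. split; [|exact Hd].
  pose proof (L_step m). pose proof (U_step m). unfold in_window in *. lia.
Qed.

Lemma entering_entry n m :
  dies_within (S n) m (L m) -> L (m + 1) = (L m + 1)%Z -> U (m + 1) <> U m ->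
  in_window (m + 1) (U m) /\ dies_within n (m + 1) (U m).
Proof.
  intros [Hd | Hd] HLj HUj; [unfold dies in Hd; tauto|].
  assert (Hs : step m (L m) = U m)
    by (unfold step; destruct (Z.eq_dec (L m) (L m)), (Z.eq_dec (L (m + 1)) (L m + 1)); tauto).
  rewrite Hs in Hd. split; [|exact Hd].
  pose proof (L_lt_U m). pose proof (U_step m). unfold in_window. lia.
Qed.

Lemma one_row_bound z n m K :
  NoDup K -> (forall k, In k K -> in_window m k /\ dies_within (S n) m k) ->
  exists K', NoDup K' /\
    (forall k, In k K' -> in_window (m + 1) k /\ dies_within n (m + 1) k) /\
    lsum (fun k => Cmod (z k)) K
      <= Cmod (Cwin z m) + Cmod (Cwin z (m + 1)) + lsum (fun k => Cmod (z k)) K'.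
Proof.
  intros HK HKin.
  pose proof (Cmod_nonneg (Cwin z m)). pose proof (Cmod_nonneg (Cwin z (m + 1))).
  destruct (Z.eq_dec (L (m + 1)) (L m + 1)) as [HLj|HLj];
    [destruct (in_dec Z.eq_dec (L m) K) as [Hin|Hin]|].
  (* If no entry of K leaves, K itself works. *)
  2, 3: exists K; split; [exact HK|]; split; [|lra];
        intros k Hk; apply staying_entry; [apply HKin, Hk..|]; intros [-> ?]; tauto.
  (* Otherwise K = K1 ++ L m :: K2, and the other entries stay. *)
  destruct (in_split _ _ Hin) as (K1 & K2 & ->).
  assert (Hsub : forall k, In k (K1 ++ K2) -> In k (K1 ++ L m :: K2))
    by (intros k; rewrite !in_app_iff; simpl; tauto).
  assert (HK0 : forall k, In k (K1 ++ K2) -> in_window (m + 1) k /\ dies_within n (m + 1) k).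
  { intros k Hk. apply staying_entry; [apply HKin, Hsub, Hk..|].
    intros [-> _]. exact (NoDup_remove_2 _ _ _ HK Hk). }
  destruct (HKin (L m)) as [_ HLd]; [apply in_app_iff; simpl; tauto|].
  pose proof (leaving_entry_bound z m HLj) as Hleave.
  rewrite lsum_app in *; simpl in *.
  destruct (Z.eq_dec (U (m + 1)) (U m)) as [HUs|HUj].
  - exists (K1 ++ K2). split; [exact (NoDup_remove_1 _ _ _ HK)|]. split; [exact HK0|].
    rewrite lsum_app. lra.
  - exists (U m :: K1 ++ K2). split; [|split].
    + constructor; [|exact (NoDup_remove_1 _ _ _ HK)].
      intros HU. destruct (HKin (U m) (Hsub _ HU)) as [Hw _]. unfold in_window in Hw. lia.
    + intros k [<- | Hk]; [exact (entering_entry n m HLd HLj HUj) | exact (HK0 k Hk)].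
    + simpl. rewrite lsum_app. lra.
Qed.

Lemma dying_entries_bound z n : forall m K,
  NoDup K -> (forall k, In k K -> in_window m k /\ dies_within n m k) ->
  lsum (fun k => Cmod (z k)) K
    <= Cmod (Cwin z m) + 2 * zsum (m + 1) n (fun j => Cmod (Cwin z j)).
Proof.
  induction n as [|n IH]; intros m K HK HKin.
  - destruct K as [|k K]; simpl.
    + pose proof (Cmod_nonneg (Cwin z m)). lra.
    + destruct (HKin k (or_introl eq_refl)) as [_ []].
  - destruct (one_row_bound z n m K HK HKin) as (K' & HK' & HK'in & Hrow).
    pose proof (IH (m + 1)%Z K' HK' HK'in).
    rewrite zsum_cons. lra.
Qed.

Fixpoint chain (m e : Z) (j : nat) : Z :=
  match j with
  | O => e
  | S j' => chain (m + 1) (step m e) j'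
  end.

Lemma chain_add m e i j : chain m e (i + j) = chain (m + Z.of_nat i) (chain m e i) j.
Proof.
  revert m e. induction i as [|i IH]; intros m e; simpl.
  - now rewrite Z.add_0_r.
  - rewrite IH. f_equal. lia.
Qed.

Lemma chain_survives j : forall n m e,
  ~ dies_within (j + n) m e -> in_window m e ->
  in_window (m + Z.of_nat j) (chain m e j) /\ ~ dies_within n (m + Z.of_nat j) (chain m e j).
Proof.
  induction j as [|j IH]; intros n m e Hd Hw.
  - simpl. now rewrite Z.add_0_r.
  - simpl in Hd. change (chain m e (S j)) with (chain (m + 1) (step m e) j).
    replace (m + Z.of_nat (S j))%Z with (m + 1 + Z.of_nat j)%Z by lia.
    apply IH; [tauto|]. apply step_in_window; tauto.
Qed.

Lemma chain_injective j : forall n m e1 e2, e1 <> e2 ->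
  in_window m e1 -> in_window m e2 ->
  ~ dies_within (j + n) m e1 -> ~ dies_within (j + n) m e2 -> chain m e1 j <> chain m e2 j.
Proof.
  induction j as [|j IH]; intros n m e1 e2 Hne Hw1 Hw2 Hd1 Hd2; simpl; [exact Hne|].
  simpl in Hd1, Hd2. apply (IH n); try tauto.
  - now apply step_injective.
  - apply step_in_window; tauto.
  - apply step_in_window; tauto.
Qed.

Lemma chain_forward d : forall m e, chain m e d = e \/ (U m <= chain m e d)%Z.
Proof.
  induction d as [|d IH]; intros m e; simpl; [now left|].
  pose proof (U_step m). unfold step.
  destruct (Z.eq_dec e (L m)); [destruct (Z.eq_dec (L (m + 1)) (L m + 1))|].
  - destruct (IH (m + 1)%Z (U m)) as [->|]; right; lia.
  - destruct (IH (m + 1)%Z e) as [->|]; [now left|right; lia].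
  - destruct (IH (m + 1)%Z e) as [->|]; [now left|right; lia].
Qed.

Lemma chain_backward d : forall m e, chain m e d = e \/ (e < L (m + Z.of_nat d))%Z.
Proof.
  induction d as [|d IH]; intros m e; [now left|].
  change (chain m e (S d)) with (chain (m + 1) (step m e) d).
  pose proof (nondecr_shift L (fun m => proj1 (L_step m)) (m + 1) d).
  replace (m + Z.of_nat (S d))%Z with (m + 1 + Z.of_nat d)%Z by lia.
  unfold step. destruct (Z.eq_dec e (L m)) as [->|]; [destruct (Z.eq_dec (L (m + 1)) (L m + 1))|].
  - right. lia.
  - exact (IH (m + 1)%Z (L m)).
  - exact (IH (m + 1)%Z e).
Qed.

Lemma chain_unique_row m e i j :
  in_window (m + Z.of_nat i) (chain m e j) -> chain m e j = chain m e i.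
Proof.
  unfold in_window. intros Hw. destruct (Nat.le_ge_cases i j) as [Hij|Hji].
  - replace j with (i + (j - i))%nat in * by lia. rewrite chain_add in *.
    destruct (chain_forward (j - i) (m + Z.of_nat i) (chain m e i)); lia.
  - replace i with (j + (i - j))%nat in * by lia. rewrite chain_add.
    destruct (chain_backward (i - j) (m + Z.of_nat j) (chain m e j)) as [|Hlt]; [congruence|].
    rewrite Nat2Z.inj_add, Z.add_assoc in Hw. lia.
Qed.

Definition chain_support (m : Z) (M : nat) (k1 k2 : Z) : list Z :=
  map (chain m k1) (seq 0 (S M)) ++ map (chain m k2) (seq 0 (S M)).

Definition chain_indicator (m : Z) (M : nat) (k1 k2 k : Z) : bool :=
  if in_dec Z.eq_dec k (chain_support m M k1 k2) then true else false.

Lemma two_surviving_chains m M k1 k2 :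
  k1 <> k2 -> in_window m k1 -> in_window m k2 ->
  ~ dies_within M m k1 -> ~ dies_within M m k2 ->
  exists x : Z -> bool, forall j, (j < S M)%nat ->
    isum (fun k => b2R (x k)) (L (m + Z.of_nat j)) (U (m + Z.of_nat j)) = 2.
Proof.
  intros Hne Hw1 Hw2 Hd1 Hd2. exists (chain_indicator m M k1 k2). intros j Hj.
  replace M with (j + (M - j))%nat in Hd1, Hd2 by lia.
  destruct (chain_survives j _ m k1 Hd1 Hw1) as [Hp _].
  destruct (chain_survives j _ m k2 Hd2 Hw2) as [Hq _].
  pose proof (chain_injective j _ m k1 k2 Hne Hw1 Hw2 Hd1 Hd2) as Hpq.
  set (p := chain m k1 j) in *. set (q := chain m k2 j) in *.
  unfold isum. rewrite (zsum_ext _ _ _ (fun k => (if Z.eq_dec k p then 1 else 0)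
                                                 + (if Z.eq_dec k q then 1 else 0))).
  - unfold in_window in Hp, Hq. rewrite zsum_plus, !zsum_delta by lia. ring.
  - intros k Hk. assert (Hkw : in_window (m + Z.of_nat j) k) by (unfold in_window; lia).
    unfold chain_indicator, chain_support, b2R.
    destruct (in_dec Z.eq_dec k _) as [Hin|Hnin].
    + apply in_app_iff in Hin as [Hin|Hin]; apply in_map_iff in Hin as (i & <- & _).
      * rewrite (chain_unique_row m k1 j i Hkw). fold p.
        destruct (Z.eq_dec p p), (Z.eq_dec p q); congruence || ring.
      * rewrite (chain_unique_row m k2 j i Hkw). fold q.
        destruct (Z.eq_dec q p), (Z.eq_dec q q); congruence || ring.
    + assert (Hjs : In j (seq 0 (S M))) by (apply in_seq; lia).
      destruct (Z.eq_dec k p) as [->|]; [exfalso; apply Hnin, in_app_iff; left; now apply in_map|].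
      destruct (Z.eq_dec k q) as [->|]; [exfalso; apply Hnin, in_app_iff; right; now apply in_map|].
      ring.
Qed.

Lemma first_entry_bound z m M :
  (forall k1 k2, k1 <> k2 -> in_window m k1 -> in_window m k2 ->
     ~ dies_within M m k1 -> ~ dies_within M m k2 -> False) ->
  Cmod (z (L m)) <= 2 * zsum m (S M) (fun j => Cmod (Cwin z j)).
Proof.
  intros Hone. rewrite zsum_cons. pose proof (L_lt_U m) as Hm.
  pose proof (Cmod_nonneg (Cwin z m)).
  destruct (classic (dies_within M m (L m))) as [Hd|Hd].
  (* The chain of L m dies: telescope it alone. *)
  - pose proof (dying_entries_bound z M m (L m :: nil)) as Hb. simpl in Hb.
    assert (Cmod (z (L m)) + 0 <= Cmod (Cwin z m) + 2 * zsum (m + 1) M (fun j => Cmod (Cwin z j)));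
      [|lra].
    apply Hb; [repeat constructor; simpl; tauto|].
    intros k [<-|[]]. unfold in_window. split; [lia | exact Hd].
  (* Otherwise all other entries die, and z (L m) = W m - (their sum). *)
  - set (n := Z.to_nat (U m - L m - 1)).
    pose proof (dying_entries_bound z M m (zrange (L m + 1) n) (zrange_NoDup _ _)) as Hb.
    rewrite lsum_zrange in Hb.
    assert (Hrest : zsum (L m + 1) n (fun k => Cmod (z k))
                    <= Cmod (Cwin z m) + 2 * zsum (m + 1) M (fun j => Cmod (Cwin z j))).
    { apply Hb. intros k Hk. apply in_zrange in Hk. unfold n in Hk.
      assert (Hkw : in_window m k) by (unfold in_window; lia). split; [exact Hkw|].
      apply NNPP. intros Hk'. apply (Hone (L m) k); auto; [lia|unfold in_window; lia]. }
    assert (Hsplit : forall x : Z -> R, isum x (L m) (U m) = x (L m) + zsum (L m + 1) n x)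
      by (intros x; rewrite isum_cons by lia; unfold isum, n; do 2 f_equal; lia).
    pose proof (Cmod_zsum z (L m + 1) n).
    assert (Cmod (z (L m)) <= Cmod (Cwin z m)
       + Cmod (zsum (L m + 1) n (fun k => fst (z k)), zsum (L m + 1) n (fun k => snd (z k)))
       + Cmod (0, 0)) by (apply Cmod_split3; unfold Cwin; simpl; rewrite Hsplit; ring).
    rewrite Cmod_zero in *. lra.
Qed.

End SlidingWindows.

Lemma sum_mu_ge_prefix a B F N : 0 < a -> a * INR N <= B -> (forall m, 0 <= F m) ->
  zsum 0 (S N) F <= sum_mu a B F.
Proof.
  intros Ha HN HF. unfold sum_mu.
  assert (HBa : INR N <= B / a) by (apply (scale_le _ _ a); [lra|]; field_simplify; lra).
  destruct (archimed (B / a)) as [Hup _]. rewrite INR_IZR_INZ in HBa, HN.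
  assert (Z.of_nat N < up (B / a))%Z by (apply lt_IZR; lra).
  replace (S (Z.to_nat (up (B / a)))) with (S N + (Z.to_nat (up (B / a)) - N))%nat by lia.
  rewrite zsum_app.
  assert (0 <= zsum (0 + Z.of_nat (S N)) (Z.to_nat (up (B / a)) - N)
                 (fun m => if Rle_dec (a * IZR m) B then F m else 0)).
  { apply zsum_nonneg. intros k. destruct (Rle_dec _ _); [apply HF|lra]. }
  rewrite (zsum_ext 0 (S N) (fun m => if Rle_dec (a * IZR m) B then F m else 0) F); [lra|].
  intros k Hk. destruct (Rle_dec _ _) as [|Hn]; [reflexivity|]. exfalso. apply Hn.
  assert (0 <= IZR k <= IZR (Z.of_nat N)) by (split; apply IZR_le; lia). nra.
Qed.

Theorem lemma3p5 (a b c : R) (Q : nat) :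
  0 < a -> a < b -> b < c -> IsQ a b c Q ->
  forall (t : R) (z : Z -> R * R), 0 <= t < b ->
    sum_mu a (a * INR Q + 2 * a + b + c)
      (fun m => Cmod (Mapply_C a b c t z m))
    >= b / (2 * c) * Cmod (z 0%Z).
Proof.
  intros Ha Hab Hbc [HQ _] t z Ht.
  set (L := row_lo a b t). set (U := row_hi a b c t).
  assert (HL : forall m, (L m <= L (m + 1) <= L m + 1)%Z) by (intros; now apply row_lo_step).
  assert (HU : forall m, (U m <= U (m + 1) <= U m + 1)%Z) by (intros; now apply row_hi_step).
  assert (HLU : forall m, (L m < U m)%Z) by (intros; apply row_lo_lt_hi; lra).
  assert (HW : forall m, Mapply_C a b c t z m = Cwin L U z m)
    by (intros m; unfold Mapply_C, Cwin; rewrite !Mapply_window by lra; reflexivity).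
  (* Two entries of row 0 surviving Q rows would give a run of length Q+1. *)
  assert (Hz0 : Cmod (z 0%Z) <= 2 * zsum 0 (S Q) (fun j => Cmod (Mapply_C a b c t z j))).
  { replace (z 0%Z) with (z (L 0%Z)) by (unfold L; now rewrite row_lo_zero).
    rewrite (zsum_ext _ _ _ (fun j => Cmod (Cwin L U z j))) by (intros; now rewrite HW).
    apply first_entry_bound; auto.
    intros k1 k2 Hne Hw1 Hw2 Hd1 Hd2.
    destruct (two_surviving_chains L U HL HU HLU 0 Q k1 k2 Hne Hw1 Hw2 Hd1 Hd2) as [x Hx].
    assert (Hrun : run_len a b c (S Q)).
    { exists t, x, 0%Z. intros j Hj. unfold inK. rewrite Mapply_window by lra. now apply Hx. }
    apply HQ in Hrun. lia. }
  assert (Hsum : zsum 0 (S Q) (fun j => Cmod (Mapply_C a b c t z j))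
                 <= sum_mu a (a * INR Q + 2 * a + b + c) (fun m => Cmod (Mapply_C a b c t z m)))
    by (apply sum_mu_ge_prefix; [lra|lra|intros; apply Cmod_nonneg]).
  assert (Hfrac : b / (2 * c) <= 1 / 2) by (apply (scale_le _ _ (2 * c)); [lra|]; field_simplify; lra).
  pose proof (Cmod_nonneg (z 0%Z)).
  assert (b / (2 * c) * Cmod (z 0%Z) <= 1 / 2 * Cmod (z 0%Z)) by (apply Rmult_le_compat_r; lra).
  lra.
Qed.
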